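(* Let $n,k,m_1,m_2$ be integers with $k\ge1$ and $0\le m_2<m_1\le n-k$, and put $$R_3(\varepsilon)=\frac{n!\,(1+\varepsilon)_{m_1-m_2-1}\,(1-2\varepsilon)_{k+m_2}\,(1-\varepsilon)_{n-m_1-1}}{(1-\varepsilon)_n\,(1-2\varepsilon)_{k-1}\,(1-\varepsilon)_{k+m_1}\,(1+\varepsilon)_{n-k-m_1}}.$$ Then for every integer $H\ge0$ the number $d_n^{H+1}\frac1{H!}\frac{\partial^H}{\partial\varepsilon^H}R_3(\varepsilon)\big|_{\varepsilon=0}$ is an integer.
   Context: $(x)_m=x(x+1)\cdots(x+m-1)$, $(x)_0=1$; $d_n=\operatorname{lcm}(1,\dots,n)$. *)

From HB Require Import structures.
From mathcomp Require Import all_boot all_order all_algebra.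
From mathcomp Require Import all_classical all_reals all_analysis.
Set Implicit Arguments. Unset Strict Implicit. Unset Printing Implicit Defensive.
Import Order.TTheory GRing.Theory Num.Theory.
Local Open Scope ring_scope.

Definition poch {R : pzRingType} (x : R) (m : nat) : R :=
  \prod_(i < m) (x + i%:R).

Definition dlcm (n : nat) : nat := \big[lcmn/1%N]_(1 <= i < n.+1) i.

(* The rational function R_3(eps) (as a total real function; the
   denominator is nonzero near eps = 0). *)
Definition R3 {R : realType} (n k m1 m2 : nat) (e : R) : R :=
  (n`!)%:R * poch (1 + e) (m1 - m2 - 1) * poch (1 - 2 * e) (k + m2)
    * poch (1 - e) (n - m1 - 1)
  / (poch (1 - e) n * poch (1 - 2 * e) (k - 1) * poch (1 - e) (k + m1)
     * poch (1 + e) (n - k - m1)).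

From HB Require Import structures.
From mathcomp Require Import all_boot all_order all_algebra.
From mathcomp Require Import all_classical all_reals all_analysis.
From mathcomp Require Import ring lra zify.

(** Write [D = d_n]. Call a function [f], smooth near [0], [k]-integral when
    [D ^ (h + k)] times its [h]-th Taylor coefficient at [0] is an integer for
    every [h]. These functions are closed under sums, integer multiples and
    products (the Leibniz rule adds the shifts [k]); [j / (j - e)] is
    [0]-integral and [1 / (x - e)] is [1]-integral whenever [x] divides [D].
    Now [n! / (1 - e)_n] is a product of [j / (j - e)] with [1 <= j <= n],
    and the three other quotients of Pochhammer symbols in [R_3] combine,
    up to sign, into [(x1 + x2)_(s + t - 1) / ((x1)_s (x2)_t)] with
    [x1 = n - m1 - e], [x2 = - (n - k - m1) - e] and [s + t = m2 + 2].
    Splitting the last factor of the numerator as [(x1 + s - 1) + (x2 + t - 1)]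
    reduces [s + t] down to [1], where the function is a binomial multiple of
    a partial fraction [(u-1)!/v! (b - e)_v / (a - e)_u] with [v < u]; Pascal's
    rule and [u!/(x)_(u+1) = (u-1)!/(x)_u - (u-1)!/(x+1)_u] show it is
    [1]-integral. All the poles met are nonzero integers of absolute value at
    most [n], hence divisors of [d_n]. *)

Set Implicit Arguments. Unset Strict Implicit. Unset Printing Implicit Defensive.
Import Order.TTheory GRing.Theory Num.Theory.
Local Open Scope ring_scope.

Lemma sum_binomial_shift (R : comPzSemiRingType) (a b : nat -> R) h :
  \sum_(i < h.+1) 'C(h, i)%:R * (a i * b (h - i).+1%N + b (h - i)%N * a i.+1)
  = \sum_(i < h.+2) 'C(h.+1, i)%:R * (a i * b (h.+1 - i)%N).
Proof.
rewrite [LHS](eq_bigr (fun i : 'I_h.+1 => 'C(h, i)%:R * (a i * b (h - i).+1%N)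
  + 'C(h, i)%:R * (a i.+1 * b (h - i)%N)));
  last by move=> i _; rewrite mulrDr [b _ * _]mulrC.
rewrite [RHS]big_ord_recl [X in _ + X](eq_bigr (fun i : 'I_h.+1 =>
  'C(h, i)%:R * (a i.+1 * b (h - i)%N) + 'C(h, i.+1)%:R * (a i.+1 * b (h - i)%N)));
  last by move=> i _; rewrite lift0 binS natrD mulrDl subSS addrC.
rewrite !big_split /= [RHS]addrCA [LHS]addrC; congr (_ + _).
rewrite big_ord_recl [in RHS]big_ord_recr /= (bin_small (ltnSn h)) mul0r addr0.
rewrite !subn0 !bin0; congr (_ + _).
by apply: eq_bigr => i _; rewrite /bump /= add1n subnSK.
Qed.

Section SmoothOnIhalf.
Variable R : realType.
Implicit Types (f g : R -> R) (x : R).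

(* The poles of [R3] lie at distance at least [1/2] from [0]. *)
Definition Ihalf : interval R := `](- 2^-1), 2^-1[.

Lemma Ihalf0 : 0 \in Ihalf.
Proof. by rewrite in_itv /= oppr_lt0 invr_gt0 ltr0n. Qed.

Lemma Ihalf_norm x : x \in Ihalf -> `|x| < 2^-1.
Proof. by rewrite in_itv /= ltr_norml. Qed.

Lemma intr_notin_Ihalf (z : int) : z != 0 -> z%:~R \notin Ihalf.
Proof.
move=> z0; rewrite in_itv /= -ltr_norml -leNgt.
have z1 : 1 <= `|z%:~R : R| by rewrite -intr_norm ler1z; lia.
by apply: le_trans z1; rewrite invf_le1 // ler1n.
Qed.

Lemma derive_eq_in f g x : {in Ihalf, f =1 g} -> x \in Ihalf ->
  'D_1 f x = 'D_1 g x.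
Proof.
move=> fg Ix; apply: near_eq_derive; near do apply: fg.
exact: near_in_itvoo.
Unshelve. all: by end_near. Qed.

Lemma derivable_eq_in f g x : {in Ihalf, f =1 g} -> x \in Ihalf ->
  derivable f x 1 -> derivable g x 1.
Proof.
move=> fg Ix; apply: near_eq_derivable; near do apply: fg.
exact: near_in_itvoo.
Unshelve. all: by end_near. Qed.

Lemma derive1nSE f h x : derive1n h.+1 f x = 'D_1 (derive1n h f) x.
Proof. by rewrite derive1nS derive1E. Qed.

Definition smooth f :=
  forall h, {in Ihalf, forall x, derivable (derive1n h f) x 1}.

Lemma derive1n_eq_in f g : {in Ihalf, f =1 g} ->
  forall h, {in Ihalf, derive1n h f =1 derive1n h g}.
Proof.
move=> fg; elim=> [|h IH] x Ix; first exact: fg.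
by rewrite !derive1nSE (derive_eq_in IH).
Qed.

Lemma smooth_eq_in f g : {in Ihalf, f =1 g} -> smooth f -> smooth g.
Proof.
move=> fg sf h x Ix; apply: derivable_eq_in (sf h x Ix) => //.
exact: derive1n_eq_in.
Qed.

Lemma derive1nS_cst c h : derive1n h.+1 (cst c) = cst (0 : R).
Proof.
elim: h => [|h IH]; rewrite derive1nS ?IH; apply/funext => y /=;
exact: derive1_cst.
Qed.

Lemma smooth_cst c : smooth (cst c).
Proof. by case=> [|h] x _; rewrite ?derive1nS_cst; exact: derivable_cst. Qed.

Lemma derive1nD f g : smooth f -> smooth g -> forall h, {in Ihalf, forall x,
  derive1n h (fun y => f y + g y) x = derive1n h f x + derive1n h g x}.
Proof.
move=> sf sg; elim=> [|h IH] x Ix //.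
rewrite derive1nSE (@derive_eq_in _ (derive1n h f + derive1n h g)) //.
rewrite deriveD; last 2 first.
- exact: sf.
- exact: sg.
- by rewrite -!derive1nSE.
Qed.

Lemma smoothD f g : smooth f -> smooth g -> smooth (fun y => f y + g y).
Proof.
move=> sf sg h x Ix.
apply: (@derivable_eq_in (derive1n h f + derive1n h g)) => // [y Iy|].
  by rewrite derive1nD.
by apply: derivableD; [exact: sf|exact: sg].
Qed.

Lemma derivableMl c f x : derivable f x 1 -> derivable (c \*o f) x 1.
Proof. by move=> df; apply: (@derivableM _ _ (cst c)) => //; exact: derivable_cst. Qed.

Lemma derive1nZ c f : smooth f -> forall h, {in Ihalf, forall x,
  derive1n h (fun y => c * f y) x = c * derive1n h f x}.
Proof.
move=> sf; elim=> [|h IH] x Ix //.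
rewrite derive1nSE (@derive_eq_in _ (c \*o derive1n h f)) //.
by rewrite deriveMl -?derive1nSE //; exact: sf.
Qed.

Lemma smoothZ c f : smooth f -> smooth (fun y => c * f y).
Proof.
move=> sf h x Ix.
apply: (@derivable_eq_in (c \*o derive1n h f)) => // [y Iy|].
  by rewrite derive1nZ.
exact/derivableMl/sf.
Qed.

Lemma derive1nM f g : smooth f -> smooth g -> forall h, {in Ihalf, forall x,
  derive1n h (fun y => f y * g y) x =
  \sum_(i < h.+1) 'C(h, i)%:R * (derive1n i f x * derive1n (h - i)%N g x)}.
Proof.
move=> sf sg; elim=> [|h IH] x Ix; first by rewrite big_ord1 bin0 mul1r.
pose F i := 'C(h, i)%:R \*o (derive1n i f * derive1n (h - i)%N g).
have dF i : derivable (F i) x 1.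
  by apply/derivableMl/derivableM; [exact: sf|exact: sg].
rewrite derive1nSE (@derive_eq_in _ (\sum_(i < h.+1) F i)) => [|y Iy|//]; last first.
  by rewrite IH // fct_sumE.
rewrite derive_sum //.
rewrite -(sum_binomial_shift (fun i => derive1n i f x) (fun i => derive1n i g x)).
apply: eq_bigr => i _.
rewrite deriveMl; last by apply: derivableM; [exact: sf|exact: sg].
rewrite deriveM; [|exact: sf|exact: sg].
by rewrite -!derive1nSE.
Qed.

Lemma smoothM f g : smooth f -> smooth g -> smooth (fun y => f y * g y).
Proof.
move=> sf sg h x Ix.
pose F i := 'C(h, i)%:R \*o (derive1n i f * derive1n (h - i)%N g).
apply: (@derivable_eq_in (\sum_(i < h.+1) F i)) => // [y Iy|].
  by rewrite derive1nM // fct_sumE.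
apply: derivable_sum => i; apply/derivableMl/derivableM; [exact: sf|exact: sg].
Qed.

Lemma derive_inv_sub c x : c - x != 0 ->
  derivable (fun z => (c - z)^-1) x 1 /\
  'D_1 (fun z => (c - z)^-1) x = (c - x)^-1 ^+ 2.
Proof.
move=> cx; have dB : derivable (cst c - id : R -> R) x 1.
  by apply: derivableB; [exact: derivable_cst|exact: derivable_id].
split; first exact: (@derivableV _ _ (cst c - id)).
rewrite (@deriveV _ _ (cst c - id)) // deriveB;
  [|exact: derivable_cst|exact: derivable_id].
by rewrite derive_cst derive_id sub0r /GRing.scale /= mulrN1 opprK exprVn.
Qed.

Lemma notin_Ihalf_sub_neq0 c x : c \notin Ihalf -> x \in Ihalf -> c - x != 0.
Proof. by move=> cI Ix; apply: contraNneq cI => /subr0_eq ->. Qed.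

Lemma derive1n_inv_sub c : c \notin Ihalf -> forall h, {in Ihalf, forall x,
  derive1n h (fun z => (c - z)^-1) x = h`!%:R * (c - x)^-1 ^+ h.+1}.
Proof.
move=> cI; elim=> [|h IH] x Ix; first by rewrite mul1r expr1.
have [dV DV] := derive_inv_sub (notin_Ihalf_sub_neq0 cI Ix).
rewrite derive1nSE
  (@derive_eq_in _ (h`!%:R \*o (fun z => (c - z)^-1) ^+ h.+1)) //;
  last by move=> y Iy; rewrite IH // exprfctE.
rewrite deriveMl; last exact: derivableX.
rewrite deriveX // DV /GRing.scale /= factS natrM.
by rewrite [in RHS]exprSr [in RHS]exprSr; ring.
Qed.

Lemma smooth_inv_sub c : c \notin Ihalf -> smooth (fun z => (c - z)^-1).
Proof.
move=> cI h x Ix.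
apply: (@derivable_eq_in (h`!%:R \*o (fun z => (c - z)^-1) ^+ h.+1))
  => // [y Iy|].
  by rewrite derive1n_inv_sub // exprfctE.
apply/derivableMl/derivableX.
by have [] := derive_inv_sub (notin_Ihalf_sub_neq0 cI Ix).
Qed.

Definition tcoef f h := derive1n h f 0 / h`!%:R.

Lemma tcoef_eq_in f g : {in Ihalf, f =1 g} -> tcoef f =1 tcoef g.
Proof. by move=> fg h; rewrite /tcoef (derive1n_eq_in fg) // Ihalf0. Qed.

Lemma tcoefD f g : smooth f -> smooth g ->
  forall h, tcoef (fun y => f y + g y) h = tcoef f h + tcoef g h.
Proof. by move=> sf sg h; rewrite /tcoef derive1nD ?Ihalf0 // mulrDl. Qed.

Lemma tcoefZ c f : smooth f -> forall h, tcoef (fun y => c * f y) h = c * tcoef f h.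
Proof. by move=> sf h; rewrite /tcoef derive1nZ ?Ihalf0 // mulrA. Qed.

Lemma tcoefM f g : smooth f -> smooth g -> forall h,
  tcoef (fun y => f y * g y) h = \sum_(i < h.+1) tcoef f i * tcoef g (h - i)%N.
Proof.
move=> sf sg h; rewrite /tcoef derive1nM ?Ihalf0 // mulr_suml.
apply: eq_bigr => i _; have ih : (i <= h)%N by rewrite -ltnS.
have fact_neq0 m : (m`!%:R : R) != 0 by rewrite pnatr_eq0 -lt0n fact_gt0.
have bin_neq0 : ('C(h, i)%:R : R) != 0 by rewrite pnatr_eq0 -lt0n bin_gt0.
by rewrite -(bin_fact ih) !natrM; field; rewrite bin_neq0 !fact_neq0.
Qed.

Lemma tcoef_inv_sub c : c \notin Ihalf ->
  forall h, tcoef (fun z => (c - z)^-1) h = c^-1 ^+ h.+1.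
Proof.
by move=> cI h; rewrite /tcoef derive1n_inv_sub ?Ihalf0 // subr0 mulrC mulKf.
Qed.

End SmoothOnIhalf.

Arguments Ihalf {R}.

Section PochhammerQuotients.
Variable R : numFieldType.
Implicit Types (x y : R) (s t : int).

Lemma poch0 x : poch x 0 = 1.
Proof. exact: big_ord0. Qed.

Lemma pochSr x m : poch x m.+1 = poch x m * (x + m%:R).
Proof. by rewrite /poch big_ord_recr. Qed.

Lemma pochSl x m : poch x m.+1 = x * poch (x + 1) m.
Proof.
rewrite /poch big_ord_recl addr0; congr (_ * _).
by apply: eq_bigr => i _; rewrite lift0 -natr1; ring.
Qed.

Lemma pochD x a b : poch x (a + b) = poch x a * poch (x + a%:R) b.
Proof.
rewrite /poch big_split_ord; congr (_ * _).
by apply: eq_bigr => i _; rewrite natrD addrA.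
Qed.

Lemma poch_pascal y v :
  poch (y + 1) v.+1 = poch y v.+1 + v.+1%:R * poch (y + 1) v.
Proof. by rewrite pochSr pochSl -natr1; ring. Qed.

Lemma poch_reflect y m : poch y m = (-1) ^+ m * poch (1 - y - m%:R) m.
Proof.
rewrite /poch (reindex_inj rev_ord_inj) /=.
rewrite (eq_bigr (fun i : 'I_m => - (1 - y - m%:R + i%:R))) => [|i _].
  by rewrite prodrN card_ord.
by rewrite natrB ?ltn_ord // -natr1; ring.
Qed.

(* [rpoch x s = Gamma x / Gamma (x + s)]: the reciprocal of [(x)_s], with
   [(x)_(-m) = 1 / (x - m)_m] for negative exponents. *)
Definition rpoch x s : R :=
  match s with
  | Posz m => (poch x m)^-1
  | Negz m => poch (x - m.+1%:R) m.+1
  end.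

Lemma rpoch_reflect y s : rpoch y s = (-1) ^+ `|s|%N * rpoch (1 - y - s%:~R) s.
Proof.
case: s => m /=.
  by rewrite poch_reflect invfM -exprVn invrN invr1.
rewrite poch_reflect NegzE intrN opprK; congr (_ * poch _ _); rewrite -natr1; ring.
Qed.

Lemma rpoch_step x s : (0 <= s -> x + s%:~R != 0) ->
  rpoch x s = rpoch x (s + 1) * (x + s%:~R).
Proof.
case: s => [m|[|m]] nz.
- rewrite (_ : m%:Z + 1 = m.+1%:Z); last by lia.
  by rewrite /= pochSr invfM -mulrA mulVf ?mulr1 ?nz.
- rewrite (_ : Negz 0 + 1 = 0) //=.
  by rewrite /poch big_ord0 big_ord1 invr1 mul1r addr0.
rewrite (_ : Negz m.+1 + 1 = Negz m); last by rewrite !NegzE; lia.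
by rewrite /= pochSl mulrC; congr (poch _ _ * _); rewrite -[m.+2%:R]natr1; ring.
Qed.

Lemma poch_ratio x q B : poch x B != 0 ->
  poch x q / poch x B = rpoch (x + q%:R) (B%:Z - q%:Z).
Proof.
case: (leqP q B) => [qB|Bq].
  have [w ->] : exists w, B = (q + w)%N by exists (B - q)%N; rewrite subnKC.
  rewrite pochD mulf_eq0 negb_or => /andP[nz _].
  by rewrite (_ : _ - _ = w%:Z) ?invfM ?mulrA ?divff ?mul1r //; lia.
have [w ->] : exists w, q = (B + w.+1)%N by exists (q - B.+1)%N; lia.
rewrite pochD => nz; rewrite mulrAC divff // mul1r.
rewrite (_ : _ - _ = Negz w); last by rewrite NegzE; lia.
by congr poch; rewrite natrD; ring.
Qed.

Lemma rpoch_pred x s : (1 <= s -> x + (s - 1)%:~R != 0) ->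
  rpoch x (s - 1) = rpoch x s * (x + (s - 1)%:~R).
Proof.
have [r ->] : exists r, s = r + 1 by exists (s - 1); lia.
rewrite addrK => nz; apply: rpoch_step => r0; apply: nz; lia.
Qed.

Definition pfrac x1 x2 s t : R :=
  poch (x1 + x2) (absz (s + t - 1)%R) * rpoch x1 s * rpoch x2 t.

Lemma pfracC x1 x2 s t : pfrac x1 x2 s t = pfrac x2 x1 t s.
Proof. by rewrite /pfrac addrC [t + s]addrC mulrAC. Qed.

(* The last factor of the numerator is [(x1 + s - 1) + (x2 + t - 1)]. *)
Lemma pfrac_split x1 x2 s t : 2 <= s + t ->
  (1 <= s -> x1 + (s - 1)%:~R != 0) -> (1 <= t -> x2 + (t - 1)%:~R != 0) ->
  pfrac x1 x2 s t = pfrac x1 x2 (s - 1) t + pfrac x1 x2 s (t - 1).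
Proof.
move=> st nz1 nz2.
have [L sL] : exists L : nat, s + t - 1 = L.+1%:Z.
  by exists (absz (s + t - 2)%R); lia.
have L_eq : (s - 1) + (t - 1) = L%:Z by lia.
rewrite /pfrac (rpoch_pred nz1) (rpoch_pred nz2) sL.
rewrite (_ : s - 1 + t - 1 = L%:Z); last by lia.
rewrite (_ : s + (t - 1) - 1 = L%:Z); last by lia.
rewrite /= pochSr -[L%:R]/(L%:Z%:~R) -L_eq intrD; ring.
Qed.

Definition bfrac u v x y : R := (u.-1)`!%:R / poch x u * (poch y v / v`!%:R).

Lemma pfrac_base x1 x2 u : (0 < u)%N ->
  pfrac x1 x2 u%:Z (1 - u%:Z) = bfrac u u.-1 x1 (x2 - u.-1%:R).
Proof.
move=> u0; have fu : (u.-1`!%:R : R) != 0 by rewrite pnatr_eq0 -lt0n fact_gt0.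
rewrite /pfrac /bfrac (_ : u%:Z + (1 - u%:Z) - 1 = 0); last by lia.
rewrite [RHS]mulrC mulrA divfK //= poch0 mul1r mulrC; congr (_ * _).
case: u u0 {fu} => [|[|m]] // _; first by rewrite /= subnn !poch0 invr1.
by rewrite (_ : 1 - _ = Negz m) // NegzE; lia.
Qed.

Lemma bfrac_pascal u v x y :
  bfrac u v.+1 x (y + 1) = bfrac u v.+1 x y + bfrac u v x (y + 1).
Proof.
have fv : (v`!%:R : R) != 0 by rewrite pnatr_eq0 -lt0n fact_gt0.
rewrite /bfrac -mulrDr poch_pascal factS natrM; congr (_ * _); field.
by rewrite fv nat1r pnatr_eq0.
Qed.

Lemma bfrac0S u x y : (0 < u)%N -> poch x u.+1 != 0 ->
  bfrac u.+1 0 x y = bfrac u 0 x y - bfrac u 0 (x + 1) y.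
Proof.
rewrite /bfrac !poch0 fact0 divr1 !mulr1.
case: u => [|m] // _.
rewrite [poch x m.+2]pochSl [poch x m.+1]pochSl [poch (x + 1) m.+1]pochSr.
rewrite !mulf_eq0 !negb_or => /and3P[nzx nzQ nzL].
by rewrite factS natrM /=; field; rewrite nzx nzQ nzL.
Qed.

Lemma bfrac_diag u v x y : (v < u)%N -> poch x u != 0 ->
  bfrac u v x x = 'C(u.-1, v)%:R * bfrac (u - v) 0 (x + v%:R) y.
Proof.
move=> vu; have [w ->] : exists w, u = (v + w.+1)%N by exists (u - v.+1)%N; lia.
rewrite /bfrac pochD addKn addnS /= poch0 fact0.
rewrite mulf_eq0 negb_or => /andP[nzP nzQ].
rewrite -(@bin_fact (v + w) v) ?leq_addr // addKn !natrM.
have fv : (v`!%:R : R) != 0 by rewrite pnatr_eq0 -lt0n fact_gt0.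
by field; rewrite nzP nzQ fv.
Qed.

Lemma fact_div_poch (e : R) n :
  n`!%:R / poch (1 - e) n = \prod_(i < n) (i.+1%:Z%:~R * (i.+1%:Z%:~R - e)^-1).
Proof.
rewrite big_split /= prodfV fact_prod big_add1 /= big_mkord natr_prod /poch.
by congr (_ * _^-1); apply: eq_bigr => i _; rewrite -pmulrn -natr1; ring.
Qed.

End PochhammerQuotients.

Lemma poch1D_neq0 (R : realFieldType) (c : R) m :
  `|c| < 1 -> poch (1 + c) m != 0.
Proof.
rewrite ltr_norml => /andP[c1 _]; apply/prodf_neq0 => i _.
have i0 := ler0n R i; rewrite gt_eqF //; lra.
Qed.

Lemma poch_quotients_pfrac (R : realFieldType) (e : R) k m2 q B p B' :
  `|e| < 2^-1 -> (1 <= k)%N -> q.+1 = (k + B')%N -> (B + B' = m2 + q + p + 2)%N ->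
  poch (1 - 2 * e) (k + m2) / poch (1 - 2 * e) (k - 1)
  * (poch (1 - e) q / poch (1 - e) B) * (poch (1 + e) p / poch (1 + e) B')
  = (-1) ^+ `|B'%:Z - p%:Z|%N
    * pfrac (q.+1%:Z%:~R - e) ((- B'%:Z)%:~R - e) (B%:Z - q%:Z) (B'%:Z - p%:Z).
Proof.
move=> he k1 qk BB.
have e1 : `|e| < 1 by apply: lt_trans he _; rewrite invf_lt1 ?ltr1n.
have e2 : `|2 * e| < 1 by rewrite normrM ger0_norm //; lra.
rewrite !poch_ratio ?poch1D_neq0 ?normrN //.
rewrite (_ : (k - 1)%N%:Z - (k + m2)%N%:Z = Negz m2); last by rewrite NegzE; lia.
rewrite [rpoch (1 + e + _) _]rpoch_reflect /pfrac.
rewrite (_ : absz (B%:Z - q%:Z + (B'%:Z - p%:Z) - 1)%R = m2.+1); last by lia.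
have E1 :
    1 - 2 * e + (k + m2)%:R - m2.+1%:R = q.+1%:Z%:~R - e + ((- B'%:Z)%:~R - e).
  by rewrite qk !natrD intrN -natr1; ring.
have E2 : 1 - e + q%:R = q.+1%:Z%:~R - e by rewrite -pmulrn -natr1; ring.
have E3 : 1 - (1 + e + p%:R) - (B'%:Z - p%:Z)%:~R = (- B'%:Z)%:~R - e.
  by rewrite intrB; ring.
by rewrite /= E1 E2 E3; ring.
Qed.

Section TaylorDenominators.
Variables (R : realType) (D : int).
Implicit Types f g : R -> R.

Definition taylor_denom k f :=
  smooth f /\ forall h, D%:~R ^+ (h + k) * tcoef f h \is a Num.int.

Lemma taylor_denom_eq_in k f g :
  {in Ihalf, f =1 g} -> taylor_denom k f -> taylor_denom k g.
Proof.
move=> fg [sf If]; split=> [|h]; first exact: smooth_eq_in sf.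
by rewrite -(tcoef_eq_in fg).
Qed.

Lemma taylor_denomD k f g :
  taylor_denom k f -> taylor_denom k g -> taylor_denom k (fun e => f e + g e).
Proof.
move=> [sf If] [sg Ig]; split=> [|h]; first exact: smoothD.
by rewrite tcoefD // mulrDr rpredD.
Qed.

Lemma taylor_denomZ k (z : int) f :
  taylor_denom k f -> taylor_denom k (fun e => z%:~R * f e).
Proof.
move=> [sf If]; split=> [|h]; first exact: smoothZ.
by rewrite tcoefZ // mulrCA rpredM ?intr_int.
Qed.

Lemma taylor_denomB k f g :
  taylor_denom k f -> taylor_denom k g -> taylor_denom k (fun e => f e - g e).
Proof.
move=> Df Dg; apply: taylor_denom_eq_in (taylor_denomD Df (taylor_denomZ (-1) Dg)).
by move=> e _; rewrite mulN1r.
Qed.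

Lemma taylor_denomM k l f g :
  taylor_denom k f -> taylor_denom l g -> taylor_denom (k + l) (fun e => f e * g e).
Proof.
move=> [sf If] [sg Ig]; split=> [|h]; first exact: smoothM.
rewrite tcoefM // mulr_sumr; apply: rpred_sum => i _.
have ih : (i <= h)%N by rewrite -ltnS.
rewrite (_ : (h + (k + l) = (i + k) + (h - i + l))%N); last by lia.
by rewrite exprD mulrACA rpredM.
Qed.

Lemma taylor_denom1 : taylor_denom 0 1.
Proof.
split=> [|[|h]]; first exact: smooth_cst.
  by rewrite /tcoef /= expr0 mul1r divr1 rpred1.
by rewrite /tcoef derive1nS_cst mul0r mulr0 rpred0.
Qed.

Lemma taylor_denom_prod n (F : 'I_n -> R -> R) :
  (forall i, taylor_denom 0 (F i)) -> taylor_denom 0 (fun e => \prod_(i < n) F i e).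
Proof.
move=> FD; rewrite -fct_prodE; apply: big_ind => //; first exact: taylor_denom1.
by move=> f g Df Dg; exact: (taylor_denomM Df Dg).
Qed.

Hypothesis D_neq0 : D != 0.

Lemma dvdz_exprV_int (x : int) m : (x %| D)%Z ->
  (D%:~R : R) ^+ m * x%:~R^-1 ^+ m \is a Num.int.
Proof.
move=> /divzK Dx; have x0 : (x%:~R : R) != 0.
  by rewrite intr_eq0; apply: contraNneq D_neq0 => x0; rewrite -Dx x0 mulr0.
by rewrite -exprMn -Dx intrM mulfK // rpredX ?intr_int.
Qed.

Lemma dvdz_neq0 (x : int) : (x %| D)%Z -> x != 0.
Proof. by apply: contraTneq => ->; rewrite dvd0z. Qed.

Lemma taylor_denom_inv_sub (x : int) :
  (x %| D)%Z -> taylor_denom 1 (fun e => (x%:~R - e)^-1).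
Proof.
move=> xD; have xI := intr_notin_Ihalf R (dvdz_neq0 xD).
split=> [|h]; first exact: smooth_inv_sub.
by rewrite tcoef_inv_sub // addn1 dvdz_exprV_int.
Qed.

Lemma taylor_denom_scaled_inv_sub (x : int) :
  (x %| D)%Z -> taylor_denom 0 (fun e => x%:~R * (x%:~R - e)^-1).
Proof.
move=> xD; have xI := intr_notin_Ihalf R (dvdz_neq0 xD).
split=> [|h]; first exact/smoothZ/smooth_inv_sub.
rewrite tcoefZ ?tcoef_inv_sub //; last exact: smooth_inv_sub.
by rewrite addn0 exprS mulVKf ?dvdz_exprV_int ?intr_eq0 ?dvdz_neq0.
Qed.

End TaylorDenominators.

Section PartialFractionDenominators.
Variables (R : realType) (D : int).
Implicit Types (a b : int) (e : R).

Definition dvdz_range lo hi := forall x : int, lo <= x <= hi -> (x %| D)%Z.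

Lemma dvdz_range_sub lo hi lo' hi' :
  dvdz_range lo hi -> lo <= lo' -> hi' <= hi -> dvdz_range lo' hi'.
Proof. by move=> Dr l1 l2 x /andP[h1 h2]; apply: Dr; lia. Qed.

Hypothesis D_neq0 : D != 0.

Lemma intr_sub_add a e (i : int) : a%:~R - e + i%:~R = (a + i)%:~R - e.
Proof. by rewrite intrD addrAC. Qed.

Lemma intr_sub_neq0 (x : int) e : (x %| D)%Z -> e \in Ihalf -> x%:~R - e != 0.
Proof.
move=> xD Ie; apply: contraNneq (intr_notin_Ihalf R (dvdz_neq0 D_neq0 xD)).
by move/subr0_eq => ->.
Qed.

Lemma poch_intr_sub_neq0 a u e :
  dvdz_range a (a + u%:Z - 1) -> e \in Ihalf -> poch (a%:~R - e) u != 0.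
Proof.
move=> aD Ie; apply/prodf_neq0 => i _.
rewrite (intr_sub_add a e i); apply: intr_sub_neq0 => //; apply: aD.
by have := ltn_ord i; lia.
Qed.

(* [bfrac u 0 x y] does not depend on [y]. *)
Lemma taylor_denom_bfrac0 u a (y : R -> R) :
  (0 < u)%N -> dvdz_range a (a + u%:Z - 1) ->
  taylor_denom D 1 (fun e => bfrac u 0 (a%:~R - e) (y e)).
Proof.
elim: u a => [|[|u] IH] a // _ aD.
  apply: (@taylor_denom_eq_in _ _ _ (fun e => (a%:~R - e)^-1)).
    by move=> e _; rewrite /bfrac /poch big_ord1 big_ord0 /= addr0 divr1 mulr1 div1r.
  by apply: taylor_denom_inv_sub => //; apply: aD; lia.
apply: (@taylor_denom_eq_in _ _ _
  (fun e => bfrac u.+1 0 (a%:~R - e) (y e) - bfrac u.+1 0 ((a + 1)%:~R - e) (y e))).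
  by move=> e Ie; rewrite [RHS]bfrac0S ?poch_intr_sub_neq0 // -(intr_sub_add a e 1).
by apply: taylor_denomB; apply: IH => //; apply: (dvdz_range_sub aD); lia.
Qed.

Lemma taylor_denom_bfrac v u a b : (v < u)%N -> dvdz_range a (a + u%:Z - 1) ->
  taylor_denom D 1 (fun e => bfrac u v (a%:~R - e) (b%:~R - e)).
Proof.
(* At [b = a] the function is a binomial multiple of the case [v = 0];
   Pascal's rule then moves [b] one step at a time. *)
elim: v b => [|v IH] b vu aD.
  exact: (taylor_denom_bfrac0 (fun e => b%:~R - e)).
have {}IH b' := IH b' (ltnW vu) aD.
have diag : taylor_denom D 1 (fun e => bfrac u v.+1 (a%:~R - e) (a%:~R - e)).
  apply: (@taylor_denom_eq_in _ _ _ (fun e =>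
    'C(u.-1, v.+1)%:Z%:~R * bfrac (u - v.+1) 0 ((a + v.+1%:Z)%:~R - e) 0)).
    move=> e Ie; rewrite [RHS](bfrac_diag 0 vu) ?poch_intr_sub_neq0 //.
    by rewrite -(intr_sub_add a e v.+1).
  apply: taylor_denomZ; apply: (taylor_denom_bfrac0 (fun _ => 0)).
    by rewrite subn_gt0.
  by apply: (dvdz_range_sub aD); lia.
have up d : taylor_denom D 1 (fun e => bfrac u v.+1 (a%:~R - e) ((a + d%:Z)%:~R - e)).
  elim: d => [|d IHd]; first by rewrite addr0.
  apply: (@taylor_denom_eq_in _ _ _
    (fun e => bfrac u v.+1 (a%:~R - e) ((a + d%:Z)%:~R - e)
      + bfrac u v (a%:~R - e) ((a + d.+1%:Z)%:~R - e))); last exact: taylor_denomD.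
  move=> e _; rewrite (_ : a + d.+1%:Z = a + d%:Z + 1); last by lia.
  by rewrite -(intr_sub_add _ e 1) bfrac_pascal.
have down d : taylor_denom D 1 (fun e => bfrac u v.+1 (a%:~R - e) ((a - d%:Z)%:~R - e)).
  elim: d => [|d IHd]; first by rewrite subr0.
  apply: (@taylor_denom_eq_in _ _ _
    (fun e => bfrac u v.+1 (a%:~R - e) ((a - d%:Z)%:~R - e)
      - bfrac u v (a%:~R - e) ((a - d%:Z)%:~R - e))); last exact: taylor_denomB.
  move=> e _; rewrite (_ : a - d%:Z = a - d.+1%:Z + 1); last by lia.
  by rewrite -(intr_sub_add _ e 1) bfrac_pascal addrK.
case: (lerP a b) => ab.
  by rewrite (_ : b = a + (absz (b - a))%:Z); [apply: up | lia].
by rewrite (_ : b = a - (absz (b - a))%:Z); [apply: down | lia].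
Qed.

Lemma taylor_denom_pfrac L a1 s a2 t : s + t = L.+1%:Z ->
  dvdz_range a1 (a1 + s - 1) -> dvdz_range a2 (a2 + t - 1) ->
  taylor_denom D 1 (fun e => pfrac (a1%:~R - e) (a2%:~R - e) s t).
Proof.
elim: L a1 s a2 t => [|L IH] a1 s a2 t st D1 D2.
  wlog s1 : a1 s a2 t st D1 D2 / 1 <= s.
    move=> base; case: (lerP 1 s) => s1; first exact: base.
    apply: (@taylor_denom_eq_in _ _ _ (fun e => pfrac (a2%:~R - e) (a1%:~R - e) t s)).
      by move=> e _; rewrite pfracC.
    by apply: base => //; lia.
  have [u su] : exists u : nat, s = u%:Z by exists (absz s); lia.
  have tu : t = 1 - u%:Z by lia.
  rewrite su tu in D1 D2 *.
  apply: (@taylor_denom_eq_in _ _ _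
    (fun e => bfrac u u.-1 (a1%:~R - e) ((a2 - u.-1%:Z)%:~R - e))).
    move=> e _; rewrite pfrac_base; last by lia.
    by rewrite intrB addrAC.
  by apply: taylor_denom_bfrac => //; lia.
apply: (@taylor_denom_eq_in _ _ _
  (fun e => pfrac (a1%:~R - e) (a2%:~R - e) (s - 1) t
    + pfrac (a1%:~R - e) (a2%:~R - e) s (t - 1))).
  move=> e Ie; rewrite [RHS]pfrac_split; first by [].
  - by lia.
  - by move=> s1; rewrite intr_sub_add; apply: intr_sub_neq0 Ie; apply: D1; lia.
  - by move=> t1; rewrite intr_sub_add; apply: intr_sub_neq0 Ie; apply: D2; lia.
apply: taylor_denomD; apply: IH.
- by lia.
- by apply: (dvdz_range_sub D1); lia.
- by apply: (dvdz_range_sub D2); lia.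
- by lia.
- by apply: (dvdz_range_sub D1); lia.
- by apply: (dvdz_range_sub D2); lia.
Qed.

End PartialFractionDenominators.

Lemma dlcm_gt0 n : (0 < dlcm n)%N.
Proof.
rewrite /dlcm big_nat_cond; apply: (big_ind (fun m => 0 < m)%N) => //.
  by move=> a b a0 b0; rewrite lcmn_gt0 a0.
by move=> i /andP[/andP[]].
Qed.

Lemma dvdn_dlcm n j : (0 < j)%N -> (j <= n)%N -> (j %| dlcm n)%N.
Proof.
move=> j0 jn; rewrite /dlcm (@big_cat_nat _ _ _ j) ?(leqW jn) //=.
rewrite [X in lcmn _ X]big_ltn ?ltnS //.
exact: dvdn_trans (dvdn_lcml _ _) (dvdn_lcmr _ _).
Qed.

Definition R3_pfrac (R : realType) n k m1 m2 (e : R) : R :=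
  \prod_(i < n) (i.+1%:Z%:~R * (i.+1%:Z%:~R - e)^-1)
  * (((-1) ^+ `|(n - k - m1)%:Z - (m1 - m2 - 1)%:Z|%N : int)%:~R
     * pfrac ((n - m1 - 1).+1%:Z%:~R - e) ((- (n - k - m1)%:Z)%:~R - e)
         ((k + m1)%:Z - (n - m1 - 1)%:Z) ((n - k - m1)%:Z - (m1 - m2 - 1)%:Z)).

Lemma R3_pfracE (R : realType) n k m1 m2 :
  (1 <= k)%N -> (m2 < m1)%N -> (m1 <= n - k)%N ->
  {in @Ihalf R, R3_pfrac n k m1 m2 =1 R3 n k m1 m2}.
Proof.
move=> hk hm hm1 e Ie.
rewrite /R3 /R3_pfrac -fact_div_poch rmorphXn rmorphN1.
rewrite -(@poch_quotients_pfrac _ e k m2) ?Ihalf_norm //; last 2 first.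
- by lia.
- by lia.
- by rewrite !invfM; ring.
Qed.

Lemma taylor_denom_R3 (R : realType) (D : int) n k m1 m2 : D != 0 ->
  (forall x : int, x != 0 -> (`|x| <= n)%N -> (x %| D)%Z) ->
  (1 <= k)%N -> (m2 < m1)%N -> (m1 <= n - k)%N ->
  taylor_denom D 1 (@R3 R n k m1 m2).
Proof.
move=> D_neq0 dvdD hk hm hm1.
apply: taylor_denom_eq_in (R3_pfracE hk hm hm1) _.
apply: (@taylor_denomM _ _ 0 1).
  apply: taylor_denom_prod => i.
  apply: taylor_denom_scaled_inv_sub => //.
  by apply: dvdD => //; exact: ltn_ord.
apply: taylor_denomZ; apply: (@taylor_denom_pfrac R D D_neq0 m2.+1).
- by lia.
- by move=> x /andP[x1 x2]; apply: dvdD; lia.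
- by move=> x /andP[x1 x2]; apply: dvdD; lia.
Qed.

Theorem mainTheorem17 (R : realType) (n k m1 m2 H : nat)
  (hk : (1 <= k)%N) (hm : (m2 < m1)%N) (hm1 : (m1 <= n - k)%N) :
  exists z : int,
    ((dlcm n) ^ H.+1)%:R * (H`!)%:R^-1 * (derive1n H (@R3 R n k m1 m2)) 0
    = z%:~R.
Proof.
have dlcm_neq0 : (dlcm n)%:Z != 0 by rewrite eqz_nat -lt0n dlcm_gt0.
have dvd_dlcm (x : int) : x != 0 -> (`|x| <= n)%N -> (x %| (dlcm n)%:Z)%Z.
  by move=> x0 xn; apply: dvdn_dlcm; rewrite ?absz_gt0.
have [_ /(_ H) /intrP[z hz]] := taylor_denom_R3 R dlcm_neq0 dvd_dlcm hk hm hm1.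
by exists z; rewrite -hz /tcoef natrX addn1 mulrAC mulrA.
Qed.
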